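(* For $i\ge0$ and $j\ge0$, the map $\phi_i$ restricts to a linear isomorphism of $M_i(j)$ onto the $A_*$-subcomodule $N_{i-1}(j)\subset(A/\!/A(i-1))_*$.
   Context: $A_*$ is the mod $2$ dual Steenrod algebra with conjugate generators $\bar\xi_k$. For $i\ge-1$, $A(i)_*=\mathbb{F}_2[\bar\xi_1,\dots,\bar\xi_{i+1}]/(\bar\xi_1^{2^{i+1}},\dots,\bar\xi_{i+1}^2)$ and $(A/\!/A(i))_*=A_*\square_{A(i)_*}\mathbb{F}_2=\mathbb{F}_2[\bar\xi_1^{2^{i+1}},\bar\xi_2^{2^i},\dots,\bar\xi_{i+1}^2,\bar\xi_{i+2},\dots]$. Give $A_*$ the multiplicative ''Brown–Gitler weight'' in which $\bar\xi_k$ has weight $2^{k-1}$; every monomial of $(A/\!/A(i))_*$ has weight divisible by $2^{i+1}$. $N_i(j)\subset(A/\!/A(i))_*$ is the span of monomials of weight $\le2^{i+1}j$ (an $A_*$-subcomodule), and $M_i(j)\subset(A/\!/A(i))_*$ is the span of monomials of weight exactly $2^{i+1}j$. $\phi_i:(A/\!/A(i))_*\to(A/\!/A(i-1))_*$ is the ring map with $\phi_i(\bar\xi_k^{2^l})=\bar\xi_{k-1}^{2^l}$ for $k>1$ and $\phi_i(\bar\xi_1^{2^{i+1}})=1$. *)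

From mathcomp Require Import all_boot.
Set Implicit Arguments. Unset Strict Implicit. Unset Printing Implicit Defensive.

(* A monomial of A_* = F_2[xi_1, xi_2, ...] (conjugate generators) is encoded by
   its exponent sequence: [nth 0 e t] is the exponent of xi_{t+1}. *)
Definition mono := seq nat.

Definition meq (e f : mono) : bool :=
  all (fun t => nth 0 e t == nth 0 f t) (iota 0 (maxn (size e) (size f))).

(* An element of A_* (an F_2-linear combination of monomials) is encoded by a
   finite formal sum (list) of monomials; its coefficient at m is the parity of
   the number of occurrences of m. *)
Definition poly := seq mono.
Definition coef (p : poly) (m : mono) : bool := odd (count (meq m) p).
Definition peq (p q : poly) : Prop := forall m, coef p m = coef q m.

Definition in_span (S : mono -> bool) (p : poly) : Prop :=
  forall m, coef p m -> S m.

(* Brown--Gitler weight: xi_k has weight 2^(k-1), multiplicative. *)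
Definition weight (e : mono) : nat := \sum_(t < size e) nth 0 e t * 2 ^ t.

(* Parameter convention: [s] stands for i+1, so s ranges over nat <-> i >= -1.
   A monomial lies in (A//A(i))_* = F_2[xi_1^(2^(i+1)), xi_2^(2^i), ...,
   xi_(i+1)^2, xi_(i+2), ...] iff 2^(i+2-k) divides the exponent of xi_k for
   k <= i+1, i.e. 2^(s-t) | e_t for t < s (0-indexed). *)
Definition in_AmodA (s : nat) (e : mono) : bool :=
  all (fun t => 2 ^ (s - t) %| nth 0 e t) (iota 0 s).

Definition N_mono (s j : nat) (e : mono) : bool :=
  in_AmodA s e && (weight e <= 2 ^ s * j).
Definition M_mono (s j : nat) (e : mono) : bool :=
  in_AmodA s e && (weight e == 2 ^ s * j).

Definition inN (s j : nat) (p : poly) : Prop := in_span (N_mono s j) p.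
Definition inM (s j : nat) (p : poly) : Prop := in_span (M_mono s j) p.

(* phi_i : (A//A(i))_* -> (A//A(i-1))_*, the ring map with
   xi_k^(2^l) |-> xi_(k-1)^(2^l) (k > 1) and xi_1^(2^(i+1)) |-> 1.
   On a monomial of (A//A(i))_* it drops the xi_1 exponent and shifts the
   others down by one index; extended linearly. *)
Definition phi_mono (e : mono) : mono := behead e.
Definition phi (p : poly) : poly := map phi_mono p.

From mathcomp Require Import all_boot.
Set Implicit Arguments. Unset Strict Implicit. Unset Printing Implicit Defensive.

(* Writing e = x :: f, the weight
   satisfies  weight e = x + 2 * weight f,  so for e of weight exactly 2^(i+1) j
   the exponent x is determined by f: behead is injective on M-monomials, sends
   them into N-monomials, and  f |-> (2^(i+1) j - 2 weight f) :: f  inverts it. *)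

Section Parity.
Variable T : eqType.

Lemma odd_count_undup (P : pred T) (s : seq T) :
  odd (count P s) = \big[addb/false]_(x <- undup s | P x) odd (count_mem x s).
Proof.
have -> : odd (count P s) = \big[addb/false]_(x <- s | P x) true.
  elim: s => [|x s IH]; first by rewrite big_nil.
  by rewrite big_cons /= oddD IH; case: (P x).
rewrite -big_undup_iterop_count; apply: eq_bigr => x _.
by rewrite Monoid.iteropE; elim: (count_mem x s) => //= n ->; rewrite addTb.
Qed.

Lemma odd_count_mem (s : seq T) x : odd (count_mem x s) -> x \in s.
Proof. by move=> ox; rewrite -has_pred1 has_count odd_gt0. Qed.

Lemma odd_count_witness (P : pred T) (s : seq T) :
  odd (count P s) -> exists2 x, P x & odd (count_mem x s).
Proof.
set oddP := fun x => P x && odd (count_mem x s).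
have [/hasP[x _ /andP[Px Ho]]|noW] := boolP (has oddP (undup s)); first by exists x.
rewrite odd_count_undup big1_seq // => x /andP[Px xs].
by apply: contraNF noW => Ho; apply/hasP; exists x; rewrite // /oddP Px Ho.
Qed.

Lemma odd_count_fiber (P : pred T) (s : seq T) x : P x ->
    (forall y, y \in s -> P y -> odd (count_mem y s) -> y = x) ->
  odd (count P s) = odd (count_mem x s).
Proof.
move=> Px uniqx; rewrite -size_filter -(count_predC (pred1 x)) !count_filter oddD.
have -> : count (predI (pred1 x) P) s = count_mem x s.
  by apply: eq_count => y /=; case: eqP => // ->; rewrite Px.
suff -> : odd (count (predI (predC1 x) P) s) = false by rewrite addbF.
apply/negbTE/negP => /odd_count_witness[y /andP[/= yx Py] Ho].
by move: yx; rewrite (uniqx y (odd_count_mem Ho) Py Ho) eqxx.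
Qed.

End Parity.

Fixpoint trim (e : mono) : mono :=
  if e is x :: e' then
    if (x == 0) && (trim e' == [::]) then [::] else x :: trim e'
  else [::].

Lemma nth_trim e t : nth 0 (trim e) t = nth 0 e t.
Proof.
elim: e t => [|x e IH] [|t] //=; case: ifP => [/andP[/eqP x0 /eqP e0]|_] //=.
by rewrite -IH e0 nth_nil.
Qed.

Lemma trim_eq_nth e f :
  (forall t, nth 0 e t = nth 0 f t) -> trim e = trim f.
Proof.
have trim0 g : (forall t, nth 0 g t = 0) -> trim g = [::].
  elim: g => [|y g IH] g0 //=; have /= -> := g0 0.
  by rewrite IH // => t; apply: (g0 t.+1).
elim: e f => [|x e IH] [|y f] ef.
- by [].
- by rewrite (trim0 (y :: f)) // => t; rewrite -ef nth_nil.
- by rewrite (trim0 (x :: e)) // => t; rewrite ef nth_nil.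
- by have /= -> := ef 0; rewrite /= (IH f (fun t => ef t.+1)).
Qed.

Lemma meq_trim e f : meq e f = (trim e == trim f).
Proof.
apply/allP/eqP => [ef | ef t _]; last by rewrite -(nth_trim e) -(nth_trim f) ef.
apply: trim_eq_nth => t; case: (ltnP t (maxn (size e) (size f))) => ht.
  by apply/eqP/ef; rewrite mem_iota.
by move: ht; rewrite geq_max => /andP[he hf]; rewrite !nth_default.
Qed.

Lemma trim_behead e : trim (behead e) = behead (trim e).
Proof. by case: e => [|x e] //=; case: ifP => [/andP[_ /eqP ->]|_]. Qed.

Lemma weight_cons x e : weight (x :: e) = x + 2 * weight e.
Proof.
rewrite /weight big_ord_recl expn0 muln1 big_distrr; congr (_ + _).
by apply: eq_bigr => t _; rewrite /= expnS mulnCA.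
Qed.

Lemma weight_behead e : weight e = head 0 e + 2 * weight (behead e).
Proof. by case: e => [|x e]; rewrite ?weight_cons // /weight big_ord0. Qed.

Lemma weight_trim e : weight (trim e) = weight e.
Proof.
elim: e => [|x e IH] //=; case: ifP => [/andP[/eqP-> /eqP e0]|_].
  by rewrite weight_cons -IH e0 /weight big_ord0.
by rewrite !weight_cons IH.
Qed.

Lemma in_AmodA_trim s e : in_AmodA s (trim e) = in_AmodA s e.
Proof. by apply: eq_all => t; rewrite /= nth_trim. Qed.

Lemma N_mono_trim s j e : N_mono s j (trim e) = N_mono s j e.
Proof. by rewrite /N_mono in_AmodA_trim weight_trim. Qed.

Lemma M_mono_trim s j e : M_mono s j (trim e) = M_mono s j e.
Proof. by rewrite /M_mono in_AmodA_trim weight_trim. Qed.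

Lemma coefE p m : coef p m = odd (count_mem (trim m) (map trim p)).
Proof.
by rewrite /coef count_map; congr odd; apply: eq_count => e; rewrite /= meq_trim eq_sym.
Qed.

Section Span.
Variable S : mono -> bool.
Hypothesis S_trim : forall e, S (trim e) = S e.

Lemma meq_S e f : meq e f -> S e = S f.
Proof. by rewrite meq_trim => /eqP ef; rewrite -S_trim ef S_trim. Qed.

Lemma in_span_all p : all S p -> in_span S p.
Proof.
move=> /allP Sp m; rewrite /coef => /odd_gt0; rewrite -has_count => /hasP[e pe me].
by rewrite (meq_S me) Sp.
Qed.

Lemma peq_filter p : in_span S p -> peq (filter S p) p.
Proof.
move=> Sp m; rewrite /coef count_filter.
have [Sm | nSm] := boolP (S m).
  by congr odd; apply: eq_count => e /=; case me: (meq m e); rewrite // -(meq_S me).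
rewrite (@eq_count _ _ pred0) ?count_pred0; last first.
  by move=> e /=; case me: (meq m e); rewrite //= -(meq_S me) (negbTE nSm).
by apply/esym/negbTE; apply: contra nSm; apply: Sp.
Qed.

End Span.

Lemma M_behead_N i j e : M_mono i.+1 j e -> N_mono i j (behead e).
Proof.
move=> /andP[/allP Ae /eqP we]; apply/andP; split.
  apply/allP => t; rewrite mem_iota add0n => /andP[_ ti].
  by rewrite nth_behead; have := Ae t.+1; rewrite mem_iota subSS; apply.
move: we; rewrite weight_behead expnS -mulnA => we.
by rewrite -(leq_pmul2l (isT : 0 < 2)) -we leq_addl.
Qed.

Lemma weight_dvd s f : in_AmodA s f -> 2 ^ s %| weight f.
Proof.
move=> /allP Af; apply: dvdn_sum => t _; case: (ltnP t s) => ts.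
  have := Af t; rewrite mem_iota ts => /(_ isT) dvd_ft.
  by rewrite -(subnK (ltnW ts)) expnD dvdn_mul.
by apply: dvdn_mull; rewrite dvdn_exp2l.
Qed.

(* The inverse of [behead]: restore the xi_1 exponent forced by the weight. *)
Definition liftm (i j : nat) (f : mono) : mono := (2 ^ i.+1 * j - 2 * weight f) :: f.

Lemma liftm_M i j f : N_mono i j f -> M_mono i.+1 j (liftm i j f).
Proof.
move=> /andP[Af wf]; have le_wf : 2 * weight f <= 2 ^ i.+1 * j.
  by rewrite expnS -mulnA leq_mul2l wf orbT.
apply/andP; split; last by rewrite weight_cons subnK.
apply/allP => -[|t]; rewrite mem_iota => /andP[_ ti] /=.
  rewrite subn0; apply: dvdn_sub; first exact: dvdn_mulr.
  by rewrite expnS dvdn_mul // weight_dvd.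
by rewrite subSS; move/allP: Af; apply; rewrite mem_iota.
Qed.

Lemma M_mono_behead_inj s j e f : M_mono s j e -> M_mono s j f ->
  trim (behead e) = trim (behead f) -> trim e = trim f.
Proof.
move=> /andP[_ /eqP we] /andP[_ /eqP wf] ef; apply: trim_eq_nth => -[|t].
  rewrite !nth0; apply/eqP; rewrite -(eqn_add2r (2 * weight (behead e))).
  rewrite -weight_behead -[weight (behead e)]weight_trim ef weight_trim.
  by rewrite -weight_behead we wf.
by rewrite -!nth_behead -(nth_trim (behead e)) ef nth_trim.
Qed.

Lemma phi_trim p : map trim (phi p) = map behead (map trim p).
Proof. by rewrite -!map_comp; apply: eq_map => e; rewrite /= trim_behead. Qed.

Lemma coef_phi_support p m :
  coef (phi p) m -> exists2 e, coef p e & trim (behead e) = trim m.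
Proof.
rewrite coefE phi_trim count_map => /odd_count_witness[x /= /eqP xm ox].
have /mapP[e _ xe] := odd_count_mem ox.
by exists e; rewrite ?coefE -?xe // trim_behead -xe.
Qed.

(* For p in M_i(j), phi preserves the coefficient of every monomial of M_i(j):
   by [M_mono_behead_inj] it is the only monomial of p in its fibre. *)
Lemma coef_phi i j p m : inM i.+1 j p -> M_mono i.+1 j m ->
  coef (phi p) (behead m) = coef p m.
Proof.
move=> Mp Mm; rewrite !coefE phi_trim count_map trim_behead.
apply: odd_count_fiber => [|_ /mapP[e _ ->] /= /eqP be oe]; first by rewrite /= eqxx.
have Me : M_mono i.+1 j e by apply: Mp; rewrite coefE.
by apply: (M_mono_behead_inj Me Mm); rewrite !trim_behead.
Qed.

Lemma phi_M_N i j p : inM i.+1 j p -> inN i j (phi p).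
Proof.
move=> Mp m /coef_phi_support[e pe em].
by rewrite -N_mono_trim -em N_mono_trim; apply: M_behead_N; apply: Mp.
Qed.

Lemma phi_inj_M i j p q : inM i.+1 j p -> inM i.+1 j q ->
  peq (phi p) (phi q) -> peq p q.
Proof.
move=> Mp Mq pq m; have [Mm | nMm] := boolP (M_mono i.+1 j m).
  by rewrite -(coef_phi Mp Mm) -(coef_phi Mq Mm) pq.
by rewrite (contraNF (Mp m) nMm) (contraNF (Mq m) nMm).
Qed.

Definition lift_poly (i j : nat) (q : poly) : poly :=
  map (liftm i j) (filter (N_mono i j) q).

Lemma lift_poly_M i j q : inM i.+1 j (lift_poly i j q).
Proof.
apply: in_span_all; first exact: M_mono_trim.
by rewrite all_map; apply/allP => f; rewrite mem_filter => /andP[Nf _]; apply: liftm_M.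
Qed.

Lemma phi_lift_poly i j q : inN i j q -> peq (phi (lift_poly i j q)) q.
Proof.
have -> : phi (lift_poly i j q) = filter (N_mono i j) q by rewrite /phi -map_comp map_id.
exact: (@peq_filter (N_mono i j) (N_mono_trim i j)).
Qed.

Theorem lemma5p2 (i j : nat) :
  [/\ forall p : poly, inM i.+1 j p -> inN i j (phi p),
      forall p q : poly, inM i.+1 j p -> inM i.+1 j q ->
        peq (phi p) (phi q) -> peq p q
    & forall q : poly, inN i j q -> exists p : poly, inM i.+1 j p /\ peq (phi p) q].
Proof.
split; [exact: phi_M_N | exact: phi_inj_M |].
by move=> q Nq; exists (lift_poly i j q); split; [apply: lift_poly_M | apply: phi_lift_poly].
Qed.
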